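(* Let $(x^k,z^k)\in\operatorname{conv}(X)\times Z$ satisfy the $z$-optimality condition $z^k\in\arg\min_{z\in Z}\|Qx^k-z\|_2$. Then for every $\omega\in Z^\perp$, $$\widehat{\phi}(\omega,x^k,z^k)\ \ge\ \phi^C\big(\omega+\rho(Qx^k-z^k)\big).$$
   Context: Standing setup: $f:\mathbb{R}^n\to\mathbb{R}$ is convex and continuously differentiable; $Q\in\mathbb{R}^{q\times n}$; $X\subset\mathbb{R}^n$ is nonempty and compact (not necessarily convex) and $\operatorname{conv}(X)$ denotes its convex hull; $Z\subseteq\mathbb{R}^q$ is a linear subspace and $Z^\perp=\{v\in\mathbb{R}^q: v^\top z=0\ \forall z\in Z\}$; $\rho>0$ is fixed. Define $\phi^C(\omega)=\min\{f(x)+\omega^\top Qx : x\in\operatorname{conv}(X)\}$, the augmented Lagrangian $L_\rho(x,z,\omega)=f(x)+\omega^\top Qx+\frac{\rho}{2}\|Qx-z\|_2^2$, and $\widehat{\phi}(\omega,x,z)=L_\rho(x,z,\omega)+\frac{\rho}{2}\|Qx-z\|_2^2$. *)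

From mathcomp Require Import ssreflect ssrfun ssrbool eqtype ssrnat seq fintype bigop.
From Stdlib Require Import Reals.
Open Scope R_scope.

Definition vec (n : nat) := 'I_n -> R.

Definition vadd {n} (x y : vec n) : vec n := fun i => x i + y i.
Definition vsub {n} (x y : vec n) : vec n := fun i => x i - y i.
Definition vscal {n} (a : R) (x : vec n) : vec n := fun i => a * x i.
Definition vzero {n} : vec n := fun _ => 0.

Definition dot {n} (x y : vec n) : R := \big[Rplus/0]_(i < n) (x i * y i).
Definition norm2 {n} (x : vec n) : R := sqrt (dot x x).

Definition mat (q n : nat) := 'I_q -> 'I_n -> R.
Definition mulmv {q n} (Q : mat q n) (x : vec n) : vec q :=
  fun i => \big[Rplus/0]_(j < n) (Q i j * x j).

Definition convex_fun {n} (f : vec n -> R) : Prop :=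
  forall (x y : vec n) (t : R), 0 <= t <= 1 ->
    f (vadd (vscal t x) (vscal (1 - t) y)) <= t * f x + (1 - t) * f y.

Definition has_gradient {n} (f : vec n -> R) (x g : vec n) : Prop :=
  forall eps, 0 < eps -> exists delta, 0 < delta /\
    forall h : vec n, norm2 h < delta ->
      Rabs (f (vadd x h) - f x - dot g h) <= eps * norm2 h.

Definition continuous_vec {n m} (g : vec n -> vec m) : Prop :=
  forall x eps, 0 < eps -> exists delta, 0 < delta /\
    forall y, norm2 (vsub y x) < delta -> norm2 (vsub (g y) (g x)) < eps.

Definition cont_diff {n} (f : vec n -> R) : Prop :=
  exists grad : vec n -> vec n,
    (forall x, has_gradient f x (grad x)) /\ continuous_vec grad.

(* compactness of a subset of R^n (sequential compactness, = Heine-Borel in R^n) *)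
Definition compact_set {n} (X : vec n -> Prop) : Prop :=
  forall u : nat -> vec n, (forall k, X (u k)) ->
    exists (phi : nat -> nat) (l : vec n),
      (forall k, (phi k < phi (S k))%nat) /\ X l /\
      forall eps, 0 < eps -> exists N, forall k, (N <= k)%nat ->
        norm2 (vsub (u (phi k)) l) < eps.

Definition conv {n} (X : vec n -> Prop) (x : vec n) : Prop :=
  exists (m : nat) (lam : 'I_m -> R) (p : 'I_m -> vec n),
    (forall k, 0 <= lam k) /\ \big[Rplus/0]_(k < m) lam k = 1 /\
    (forall k, X (p k)) /\
    forall i, x i = \big[Rplus/0]_(k < m) (lam k * p k i).

Definition subspace {q} (Z : vec q -> Prop) : Prop :=
  Z vzero /\ (forall x y, Z x -> Z y -> Z (vadd x y)) /\
  (forall a x, Z x -> Z (vscal a x)).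

Definition perp {q} (Z : vec q -> Prop) (v : vec q) : Prop :=
  forall z, Z z -> dot v z = 0.

Definition L_rho {n q} (f : vec n -> R) (Q : mat q n) (rho : R)
  (x : vec n) (z w : vec q) : R :=
  f x + dot w (mulmv Q x) + rho / 2 * (norm2 (vsub (mulmv Q x) z)) ^ 2.

Definition phihat {n q} (f : vec n -> R) (Q : mat q n) (rho : R)
  (w : vec q) (x : vec n) (z : vec q) : R :=
  L_rho f Q rho x z w + rho / 2 * (norm2 (vsub (mulmv Q x) z)) ^ 2.

(* "m = phi^C(w)": m is the minimum of f(x) + w^T Q x over conv(X)
   (the minimum exists under the standing assumptions). *)
Definition is_phiC {n q} (f : vec n -> R) (Q : mat q n) (X : vec n -> Prop)
  (w : vec q) (m : R) : Prop :=
  (exists x, conv X x /\ f x + dot w (mulmv Q x) = m) /\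
  (forall x, conv X x -> m <= f x + dot w (mulmv Q x)).

(** The residual [r = Q x^k - z^k] is orthogonal to [z^k]: [z^k] minimizes
    [||Q x^k - t z^k||] over all scalars [t], and a quadratic
    [t |-> ||r||^2 - 2 t (r . z^k) + t^2 ||z^k||^2] is minimal at [t = 0] only
    if its linear coefficient vanishes.  Hence evaluating the objective of
    [phi^C] at [omega + rho r] in the feasible point [x^k] gives
    [f x^k + omega . Q x^k + rho (r . (r + z^k)) = phihat omega x^k z^k],
    which bounds the minimum [phi^C] from above. *)
From mathcomp Require Import ssreflect ssrfun ssrbool eqtype ssrnat seq fintype bigop.
From Stdlib Require Import Reals Lra.
From HB Require Import structures.
Open Scope R_scope.

Lemma RplusA : associative Rplus.
Proof. by move=> x y z; ring. Qed.

Lemma RplusC : commutative Rplus.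
Proof. by move=> x y; ring. Qed.

Lemma Rplus0 : left_id 0 Rplus.
Proof. by move=> x; ring. Qed.

HB.instance Definition _ := Monoid.isComLaw.Build R 0 Rplus RplusA RplusC Rplus0.

Lemma big_Rplus_distrr (n : nat) (a : R) (F : 'I_n -> R) :
  a * \big[Rplus/0]_(i < n) F i = \big[Rplus/0]_(i < n) (a * F i).
Proof. by elim/big_rec2: _ => [|i x y _ <-]; ring. Qed.

Lemma big_Rplus_ge0 (n : nat) (F : 'I_n -> R) :
  (forall i, 0 <= F i) -> 0 <= \big[Rplus/0]_(i < n) F i.
Proof. by move=> F_ge0; elim/big_rec: _ => [|i x _ x_ge0]; [lra | have := F_ge0 i; lra]. Qed.

Lemma dot_ge0 {n : nat} (x : vec n) : 0 <= dot x x.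
Proof. by apply: big_Rplus_ge0 => i; nra. Qed.

Lemma norm2_sqr {n : nat} (x : vec n) : norm2 x ^ 2 = dot x x.
Proof. by rewrite /norm2 pow2_sqrt //; apply: dot_ge0. Qed.

Lemma norm2_le_dot {n : nat} (x y : vec n) :
  norm2 x <= norm2 y -> dot x x <= dot y y.
Proof. exact: (sqrt_le_0 _ _ (dot_ge0 x) (dot_ge0 y)). Qed.

Lemma quadratic_ge0_linear_coef_eq0 (a b : R) :
  0 <= b -> (forall t, 0 <= t * t * b - 2 * t * a) -> a = 0.
Proof.
move=> b_ge0 quad_ge0.
(* at [t = a / (b + 1)] the quadratic equals [- t^2 (b + 2)] *)
have a_eq : a = a / (b + 1) * (b + 1) by field; lra.
have := quad_ge0 (a / (b + 1)).
move: (a / (b + 1)) a_eq => t ->.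
nra.
Qed.

Lemma dot_residual_line_argmin {n : nat} (p z : vec n) :
  (forall t, norm2 (vsub p z) <= norm2 (vsub p (vscal t z))) ->
  dot (vsub p z) z = 0.
Proof.
set r := vsub p z => z_opt.
apply: (quadratic_ge0_linear_coef_eq0 _ _ (dot_ge0 z)) => s.
move/norm2_le_dot: (z_opt (1 + s)).
have expand i : vsub p (vscal (1 + s) z) i * vsub p (vscal (1 + s) z) i
  = r i * r i + (s * s * (z i * z i) + - 2 * s * (r i * z i)).
  by rewrite /r /vsub /vscal; ring.
rewrite {2}/dot (eq_bigr _ (fun i _ => expand i)) !big_split /=.
rewrite -!big_Rplus_distrr -/(dot r r) -/(dot z z) -/(dot r z).
lra.
Qed.

Theorem lemma2 (n q : nat) (f : vec n -> R) (Q : mat q n)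
  (X : vec n -> Prop) (Z : vec q -> Prop) (rho : R)
  (Hfconv : convex_fun f) (Hf1 : cont_diff f)
  (HXne : exists x, X x) (HXc : compact_set X)
  (HZ : subspace Z) (Hrho : 0 < rho)
  (xk : vec n) (zk : vec q)
  (Hxk : conv X xk) (Hzk : Z zk)
  (Hzopt : forall z, Z z -> norm2 (vsub (mulmv Q xk) zk) <= norm2 (vsub (mulmv Q xk) z))
  (w : vec q) (Hw : perp Z w) (m : R)
  (Hm : is_phiC f Q X (vadd w (vscal rho (vsub (mulmv Q xk) zk))) m) :
  phihat f Q rho w xk zk >= m.
Proof.
set p := mulmv Q xk in Hzopt Hm *; set r := vsub p zk.
have r_orth_zk : dot r zk = 0.
  apply: dot_residual_line_argmin => t; apply: Hzopt.
  by case: HZ => _ [_ Z_scal]; apply: Z_scal.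
have m_le : m <= f xk + dot (vadd w (vscal rho r)) p by apply: (proj2 Hm).
have expand i : vadd w (vscal rho r) i * p i
  = w i * p i + rho * (r i * r i + r i * zk i).
  by rewrite /vadd /vscal /r /vsub; ring.
move: m_le; rewrite {1}/dot (eq_bigr _ (fun i _ => expand i)) big_split /=.
rewrite -big_Rplus_distrr big_split /= -/(dot w p) -/(dot r r) -/(dot r zk).
rewrite /phihat /L_rho -/p -/r norm2_sqr r_orth_zk.
lra.
Qed.
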